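(* Let $\varepsilon\colon\mathbf 2\to\mathbf 2^2$ be $\varepsilon(x)=(x,x)$ and $\pi\colon\mathbf 2^2\to\mathbf 2$ be $\pi(x,y)=x\vee y$, where $\mathbf 2=\{0,1\}$; these form a commutative triangle $\mathbf 2\xrightarrow{\varepsilon}\mathbf 2^2\xrightarrow{\pi}\mathbf 2$ with $\pi\circ\varepsilon=\mathrm{id}_{\mathbf 2}$, viewed as a diagram indexed by the three-element chain $0<1<2$. There is no lifting of this diagram, with respect to $\operatorname{Con}_c$, by lattices and lattice homomorphisms $K_0\xrightarrow{e}L\xrightarrow{p}K_1$ in which the morphism $f=p\circ e\colon K_0\to K_1$ lifting $\mathrm{id}_{\mathbf 2}$ is an isomorphism.
   Context: $\mathbf 2$ and $\mathbf 2^2$ are regarded as $\{\vee,0\}$-semilattices. $\operatorname{Con}_c$ sends a lattice to its $\{\vee,0\}$-semilattice of compact (finitely generated) congruences and a lattice homomorphism $f\colon K\to L$ to the map sending a compact congruence $\alpha$ of $K$ to the congruence of $L$ generated by $\{(f(x),f(y)):(x,y)\in\alpha\}$. A diagram of lattices lifts a diagram of semilattices of the same shape if its image under $\operatorname{Con}_c$ is naturally isomorphic to it. *)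

From Stdlib Require List.
From mathcomp Require Import all_boot all_order.
Set Implicit Arguments. Unset Strict Implicit. Unset Printing Implicit Defensive.
Import Order.LTheory.
Local Open Scope order_scope.

Section Con.
Context {d : Order.disp_t} (L : latticeType d).

Definition is_congruence (R : L -> L -> Prop) : Prop :=
  (forall x, R x x) /\
  (forall x y, R x y -> R y x) /\
  (forall x y z, R x y -> R y z -> R x z) /\
  (forall a b c e, R a b -> R c e -> R (a `&` c) (b `&` e)) /\
  (forall a b c e, R a b -> R c e -> R (a `|` c) (b `|` e)).

Definition Cg (S : L -> L -> Prop) : L -> L -> Prop :=
  fun x y => forall R, is_congruence R -> (forall a b, S a b -> R a b) -> R x y.

Definition compact_con (al : L -> L -> Prop) : Prop :=
  exists s : seq (L * L), al = Cg (fun x y => List.In (x, y) s).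

Definition con_join (al be : L -> L -> Prop) : L -> L -> Prop :=
  Cg (fun x y => al x y \/ be x y).
Definition con_zero : L -> L -> Prop := Cg (fun _ _ => False).

(* phi is an isomorphism of {\/,0}-semilattices from Con_c L onto (T, join, zero);
   phi is only relevant on compact congruences *)
Definition conc_iso (T : Type) (join : T -> T -> T) (zero : T)
  (phi : (L -> L -> Prop) -> T) : Prop :=
  (forall a b, compact_con a -> compact_con b -> phi a = phi b -> a = b) /\
  (forall t, exists a, compact_con a /\ phi a = t) /\
  (forall a b, compact_con a -> compact_con b ->
     phi (con_join a b) = join (phi a) (phi b)) /\
  phi con_zero = zero.
End Con.

Definition lattice_hom {d d'} {K : latticeType d} {L : latticeType d'} (f : K -> L) : Prop :=
  (forall x y, f (x `&` y) = f x `&` f y) /\ (forall x y, f (x `|` y) = f x `|` f y).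

Definition conc_map {d d'} {K : latticeType d} {L : latticeType d'} (f : K -> L)
  (al : K -> K -> Prop) : L -> L -> Prop :=
  Cg (fun x y => exists a b, al a b /\ x = f a /\ y = f b).

Definition join2 (a b : bool) : bool := a || b.
Definition join22 (a b : bool * bool) : bool * bool := (a.1 || b.1, a.2 || b.2).
Definition eps (x : bool) : bool * bool := (x, x).
Definition pi2 (x : bool * bool) : bool := x.1 || x.2.

(* K0 -e-> L -p-> K1 lifts 2 -eps-> 2^2 -pi-> 2 (the arrow 0 -> 2 is the
   composite, handled by functoriality) *)
Definition lifts_eps_pi {d0 d d1} {K0 : latticeType d0} {L : latticeType d}
  {K1 : latticeType d1} (e : K0 -> L) (p : L -> K1) : Prop :=
  exists (phi0 : (K0 -> K0 -> Prop) -> bool)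
         (phiL : (L -> L -> Prop) -> bool * bool)
         (phi1 : (K1 -> K1 -> Prop) -> bool),
    conc_iso join2 false phi0 /\
    conc_iso join22 (false, false) phiL /\
    conc_iso join2 false phi1 /\
    (forall al, compact_con al -> phiL (conc_map e al) = eps (phi0 al)) /\
    (forall be, compact_con be -> phi1 (conc_map p be) = pi2 (phiL be)).

From mathcomp Require Import all_boot all_order.
From Stdlib Require Import FunctionalExtensionality PropExtensionality.
Local Open Scope order_scope.

(* If the lifting existed, the image under [Con_c p] of a compact congruence
   [b] would be zero iff [b] is zero (since [pi2] only vanishes at [(0,0)]),
   which forces [p] to be injective.  As [p \o e] is bijective, [e] is then
   onto, so [Con_c e] is surjective; but its image consists of diagonal
   elements of [2^2] only, missing [(1,0)]. *)

Lemma rel_ext {T : Type} (R R' : T -> T -> Prop) :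
  (forall x y, R x y <-> R' x y) -> R = R'.
Proof.
move=> RR'; apply: functional_extensionality => x.
by apply: functional_extensionality => y; apply: propositional_extensionality.
Qed.

Section Congruences.
Context {d : Order.disp_t} {L : latticeType d}.
Implicit Types (S R : L -> L -> Prop).

Lemma Cg_congruence S : is_congruence (Cg S).
Proof.
split; [|split; [|split; [|split]]].
- by move=> x R [HR _] _; apply: HR.
- by move=> x y Sxy R Rc SR; apply: Rc.2.1; apply: Sxy.
- by move=> x y z Sxy Syz R Rc SR; apply: (Rc.2.2.1 _ y); [apply: Sxy|apply: Syz].
- by move=> a b c e Sab Sce R Rc SR; apply: Rc.2.2.2.1; [apply: Sab|apply: Sce].
- by move=> a b c e Sab Sce R Rc SR; apply: Rc.2.2.2.2; [apply: Sab|apply: Sce].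
Qed.

Lemma sub_Cg S x y : S x y -> Cg S x y.
Proof. by move=> Sxy R _; apply. Qed.

Lemma eq_congruence : is_congruence (@eq L).
Proof. by split; [|split; [|split; [|split]]] => *; subst. Qed.

Lemma con_zeroP (x y : L) : con_zero x y <-> x = y.
Proof.
split; first by move=> H; apply: (H _ eq_congruence).
by move=> -> R [HR _] _; apply: HR.
Qed.

Lemma Cg_eq0 S : (forall x y, S x y -> x = y) -> Cg S = @con_zero _ L.
Proof.
move=> Seq; apply: rel_ext => x y; rewrite con_zeroP.
split; first by move/(_ _ eq_congruence); apply.
by move=> <-; apply: (Cg_congruence S).1.
Qed.

End Congruences.

Section Homomorphisms.
Context {d d' : Order.disp_t} {K : latticeType d} {L : latticeType d'}.
Context {f : K -> L} (f_hom : lattice_hom f).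

Lemma congruence_preimage (R : L -> L -> Prop) :
  is_congruence R -> is_congruence (fun a b => R (f a) (f b)).
Proof.
have [fM fJ] := f_hom; move=> [Rr [Rs [Rt [RM RJ]]]].
split; [|split; [|split; [|split]]] => //.
- by move=> x y; apply: Rs.
- by move=> x y z; apply: Rt.
- by move=> a b c e Hab Hce; rewrite !fM; apply: RM.
- by move=> a b c e Hab Hce; rewrite !fJ; apply: RJ.
Qed.

Lemma conc_map_Cg (S : K -> K -> Prop) :
  conc_map f (Cg S) = Cg (fun x y => exists a b, S a b /\ x = f a /\ y = f b).
Proof.
apply: rel_ext => x y; split.
- apply; first exact: Cg_congruence.
  move=> _ _ [a [b [Sab [-> ->]]]].
  apply: (Sab (fun u v => Cg _ (f u) (f v))).
    exact: congruence_preimage (Cg_congruence _).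
  by move=> a' b' Sa'b'; apply: sub_Cg; exists a', b'.
- apply; first exact: Cg_congruence.
  move=> _ _ [a [b [Sab [-> ->]]]].
  by apply: sub_Cg; exists a, b; split=> //; apply: sub_Cg.
Qed.

Lemma conc_map_surjective (g : L -> K) (be : L -> L -> Prop) :
  cancel g f -> compact_con be -> exists al, compact_con al /\ conc_map f al = be.
Proof.
move=> gK [s ->]; pose t := List.map (fun uv => (g uv.1, g uv.2)) s.
exists (Cg (fun a b => List.In (a, b) t)); split; first by exists t.
rewrite conc_map_Cg; congr Cg; apply: rel_ext => x y; split.
- move=> [a [b [/List.in_map_iff [[u v] [[<- <-] uv_s]] [-> ->]]]].
  by rewrite !gK.
- move=> xy_s; exists (g x), (g y); rewrite !gK; split => //.
  by apply/List.in_map_iff; exists (x, y).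
Qed.

Lemma injective_conc_map_ker0 :
  (forall be, compact_con be -> conc_map f be = @con_zero _ L -> be = @con_zero _ K) ->
  injective f.
Proof.
move=> ker0 x y fxy.
pose be := Cg (fun u v => List.In (u, v) [:: (x, y)]).
have be0 : be = @con_zero _ K.
  apply: ker0; first by exists [:: (x, y)].
  rewrite conc_map_Cg; apply: Cg_eq0 => _ _ [a [b [[[<- <-]|[]] [-> ->]]]].
  exact: fxy.
by apply/con_zeroP; rewrite -be0; apply: sub_Cg; left.
Qed.

End Homomorphisms.

Lemma conc_iso_eq0 {d : Order.disp_t} {L : latticeType d} {T : Type}
    (join : T -> T -> T) (zero : T) (phi : (L -> L -> Prop) -> T) al :
  conc_iso join zero phi -> compact_con al -> phi al = zero -> al = @con_zero _ L.
Proof.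
move=> [phi_inj [_ [_ phi0]]] al_c; rewrite -phi0.
by apply: phi_inj => //; exists [::].
Qed.

Theorem theorem8p1 (d0 d d1 : Order.disp_t)
  (K0 : latticeType d0) (L : latticeType d) (K1 : latticeType d1)
  (e : K0 -> L) (p : L -> K1) :
  lattice_hom e -> lattice_hom p -> bijective (p \o e) ->
  ~ lifts_eps_pi e p.
Proof.
move=> e_hom p_hom [h _ hpe] [phi0 [phiL [phi1 [_ [isoL [iso1 [phiE phiP]]]]]]].
have p_inj : injective p.
  apply: (injective_conc_map_ker0 p_hom) => be be_c be0.
  have := phiP be be_c; rewrite be0 iso1.2.2.2 => phiL_be.
  apply: conc_iso_eq0 isoL be_c _.
  by move: phiL_be; case: (phiL be) => [[] []].
have [be [be_c phi_be]] := isoL.2.1 (true, false).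
have eK : cancel (h \o p) e by move=> u; apply: p_inj; apply: (hpe (p u)).
have [al [al_c be_al]] := conc_map_surjective e_hom _ _ eK be_c.
by move: phi_be; rewrite -be_al phiE //; case: (phi0 al).
Qed.
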